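(* Let $n,d$ be integers with $1\le d<n$ and set $\bar k_i=\lfloor i(n+1)/(d+1)\rfloor$ for $i=1,\dots,d$. Then for $\bar\lambda_d=\binom{\bar k_d}{d}+\binom{\bar k_{d-1}}{d-1}+\cdots+\binom{\bar k_1}{1}$ we have $\delta_{n,d}(\bar\lambda_d)=\max_{0\le\lambda\le\binom nd}\delta_{n,d}(\lambda)$.
   Context: For integers $\lambda\ge0$ and $d\ge1$, $\lambda$ has a unique expansion $\lambda=\binom{k_d}{d}+\binom{k_{d-1}}{d-1}+\cdots+\binom{k_1}{1}$ with $k_d>k_{d-1}>\cdots>k_1\ge0$; define $\lambda^{[d]}=\binom{k_d}{d+1}+\binom{k_{d-1}}{d}+\cdots+\binom{k_1}{2}$. For $0\le\lambda\le\binom nd$ define $\delta_{n,d}(\lambda)=\frac{\lambda}{\binom nd}-\frac{\lambda^{[d]}}{\binom n{d+1}}$ (the difference between the linear bound and the Kruskal–Katona bound). *)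

From mathcomp Require Import all_boot all_order all_algebra.
Set Implicit Arguments. Unset Strict Implicit. Unset Printing Implicit Defensive.
Import Order.TTheory GRing.Theory Num.Theory.

(* A d-cascade (Macaulay) expansion of lam: a function k (only the values
   k 1, ..., k d matter) with k d > k (d-1) > ... > k 1 (>= 0) and
   lam = C(k d, d) + ... + C(k 1, 1). *)
Definition is_cascade (d lam : nat) (k : nat -> nat) : Prop :=
  (forall i, (1 <= i)%N -> (i < d)%N -> (k i < k i.+1)%N) /\
  lam = (\sum_(1 <= i < d.+1) 'C(k i, i))%N.

Definition kk_shadow (d : nat) (k : nat -> nat) : nat :=
  (\sum_(1 <= i < d.+1) 'C(k i, i.+1))%N.

(* delta_{n,d}(lam) = lam / C(n,d) - lam^[d] / C(n,d+1), where k is the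
   cascade expansion of lam (unique, so this is well defined). *)
Definition delta (n d lam : nat) (k : nat -> nat) : rat :=
  (lam%:R / ('C(n, d))%:R - (kk_shadow d k)%:R / ('C(n, d.+1))%:R)%R.

From mathcomp Require Import all_boot all_order all_algebra.
From mathcomp Require Import zify ring.
Import Order.TTheory GRing.Theory Num.Theory Order.NatMonotonyTheory.

(* Multiplying delta by (n - d) C(n, d) = (d + 1) C(n, d + 1) splits it into the sum of
   cascade_term (n - d) (d + 1) i (k i) over 1 <= i <= d, each depending on k i alone.
   By Pascal's rule, the increment of cascade_term a b i k in k is cascade_term a b i.-1 k,
   whose sign is that of a i - b (k - i + 1); so cascade_term a b i is unimodal in k with
   peak at floor(i (a + b) / b).  With a + b = n + 1 every summand is maximal at kbar i,
   and kbar is itself a cascade of a number at most C(n, d). *)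

Local Open Scope ring_scope.

Definition cascade_term (a b i k : nat) : rat :=
  a%:R * 'C(k, i)%:R - b%:R * 'C(k, i.+1)%:R.

Lemma le_unimodal_peak disp (T : porderType disp) (f : nat -> T) (K : nat) :
  (forall k, (k < K)%N -> (f k <= f k.+1)%O) ->
  (forall k, (K <= k)%N -> (f k.+1 <= f k)%O) ->
  forall k, (f k <= f K)%O.
Proof.
move=> up down k; case: (leqP k K) => hk.
  have conv : {in [pred i | i <= K]%N &, forall i j l, (i < l < j)%N -> (l <= K)%N}.
    by move=> i j _ /= jK l /andP[_ /ltnW/leq_trans]; apply.
  have incr : {in [pred i | i <= K]%N, forall i, (i.+1 <= K)%N -> (f i <= f i.+1)%O}.
    by move=> i _; apply: up.
  by have /(_ k K hk (leqnn K) hk) := nondecn_inP conv incr.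
have conv : {in [pred i | K <= i]%N &, forall i j l, (i < l < j)%N -> (K <= l)%N}.
  by move=> i j /= Ki _ l /andP[/ltnW/(leq_trans Ki)].
have decr : {in [pred i | K <= i]%N, forall i, (K <= i.+1)%N -> (f i.+1 <= f i)%O}.
  by move=> i Ki _; apply: down.
by have /(_ k K (ltnW hk) (leqnn K) (ltnW hk)) := nonincn_inP conv decr.
Qed.

Lemma cascade_termSS a b i k :
  cascade_term a b i.+1 k.+1 = cascade_term a b i.+1 k + cascade_term a b i k.
Proof. rewrite /cascade_term !binS !natrD; ring. Qed.

Lemma mulSn_cascade_term a b i k :
  i.+1%:R * cascade_term a b i k =
  ((a * i.+1)%:R - (b * (k - i))%:R) * 'C(k, i)%:R.
Proof.
rewrite /cascade_term mulrBr mulrBl -!natrM.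
congr (_%:R - _%:R); first by rewrite mulnCA mulnA mulnAC.
by rewrite mulnCA mul_bin_left mulnA.
Qed.

Lemma cascade_term_ge0 a b i k : (b * k.+1 <= (a + b) * i.+1)%N ->
  0 <= cascade_term a b i k.
Proof.
move=> hk; rewrite -(pmulr_rge0 _ (ltr0Sn _ i)) mulSn_cascade_term.
by rewrite mulr_ge0 // subr_ge0 ler_nat; nia.
Qed.

Lemma cascade_term_le0 a b i k : ((a + b) * i.+1 < b * k.+1)%N ->
  cascade_term a b i k <= 0.
Proof.
move=> hk; rewrite -(pmulr_rle0 _ (ltr0Sn _ i)) mulSn_cascade_term.
by rewrite mulr_le0_ge0 // subr_le0 ler_nat; nia.
Qed.

Lemma cascade_term_max a b i k : (0 < b)%N ->
  cascade_term a b i.+1 k <= cascade_term a b i.+1 (i.+1 * (a + b) %/ b).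
Proof.
move=> b_gt0; set K := (i.+1 * (a + b) %/ b)%N.
have K_le : (K * b <= i.+1 * (a + b))%N by apply: leq_divM.
have K_gt : (i.+1 * (a + b) < K.+1 * b)%N by apply: ltn_ceil.
apply: le_unimodal_peak => m hm; rewrite cascade_termSS.
  by rewrite lerDl cascade_term_ge0 //; nia.
by rewrite gerDl cascade_term_le0 //; nia.
Qed.

Lemma cascade_sum_lt d (k : nat -> nat) :
  (forall i, (1 <= i)%N -> (i < d)%N -> (k i < k i.+1)%N) ->
  (\sum_(1 <= i < d.+1) 'C(k i, i) < 'C((k d).+1, d))%N.
Proof.
elim: d => [|d IH] k_incr; first by rewrite big_geq.
rewrite big_nat_recr //= binS.
have IH' := IH (fun i h1 h2 => k_incr i h1 (ltnW h2)).
have : ('C((k d).+1, d) <= 'C(k d.+1, d))%N.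
  case: d {IH IH'} k_incr => [|d] k_incr; first by rewrite !bin0.
  exact/leq_bin2l/k_incr.
lia.
Qed.

Lemma delta_scaled n d lam k : (d < n)%N -> is_cascade d lam k ->
  delta n d lam k * ((n - d)%N%:R * ('C(n, d))%:R) =
  \sum_(1 <= i < d.+1) cascade_term (n - d) d.+1 i (k i).
Proof.
move=> hdn [_ ->].
rewrite /cascade_term sumrB -!mulr_sumr -!natr_sum /delta -/(kk_shadow d k).
have e : (n - d)%N%:R * ('C(n, d))%:R = (d.+1)%:R * ('C(n, d.+1))%:R :> rat.
  by rewrite -!natrM mul_bin_left.
have h1 : ('C(n, d))%:R != 0 :> rat by rewrite pnatr_eq0 -lt0n bin_gt0 ltnW.
have h2 : ('C(n, d.+1))%:R != 0 :> rat by rewrite pnatr_eq0 -lt0n bin_gt0.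
rewrite mulrBl; congr (_ - _); first by field.
by rewrite e; field.
Qed.

Lemma ltn_mulSn_div b m i : (0 < b <= m)%N -> (i * m %/ b < i.+1 * m %/ b)%N.
Proof.
case/andP=> b_gt0 bm; rewrite -(ltn_pmul2r b_gt0).
have := leq_divM (i * m) b; have := ltn_ceil (i.+1 * m) b_gt0; nia.
Qed.

Theorem proposition5p3 (n d : nat) :
  (1 <= d)%N -> (d < n)%N ->
  let kbar := fun i : nat => (i * n.+1 %/ d.+1)%N in
  let lbar := (\sum_(1 <= i < d.+1) 'C(kbar i, i))%N in
  is_cascade d lbar kbar /\ (lbar <= 'C(n, d))%N /\
  forall (lam : nat) (k : nat -> nat),
    (lam <= 'C(n, d))%N -> is_cascade d lam k ->
    (delta n d lam k <= delta n d lbar kbar)%R.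
Proof.
move=> _ hdn kbar lbar.
have kbar_incr i : (1 <= i)%N -> (i < d)%N -> (kbar i < kbar i.+1)%N.
  by move=> _ _; apply: ltn_mulSn_div; rewrite /= ltnS ltnW.
have kbar_d_lt : (kbar d < n)%N.
  by rewrite /kbar ltn_divLR //; nia.
split; first by split.
split.
  apply/ltnW/leq_trans; first exact: cascade_sum_lt kbar_incr.
  exact: leq_bin2l.
move=> lam k _ hk.
have scale_gt0 : 0 < (n - d)%N%:R * ('C(n, d))%:R :> rat.
  by rewrite mulr_gt0 // ltr0n ?subn_gt0 // bin_gt0 ltnW.
rewrite -(ler_pM2r scale_gt0) !delta_scaled //.
apply: ler_sum_nat => -[//|i] _.
have := @cascade_term_max (n - d) d.+1 i (k i.+1) (ltn0Sn d).
by rewrite addnS subnK // ltnW.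
Qed.
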